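(* Let $\alpha\le 2$ and $\delta\ge 0$, where if $\alpha\neq0$ we additionally require $\delta\le 1/\alpha^2$. Let $$c(u,v)=1+\alpha^2\delta(1-2u)(1-2v)\exp\{\alpha(u-u^2+v-v^2)\},\quad (u,v)\in[0,1]^2.$$ Then $c$ is totally positive of order 2 ($TP_2$), i.e. $c(u_1,v_1)c(u_2,v_2)-c(u_1,v_2)c(u_2,v_1)\ge0$ for all $u_1<u_2$, $v_1<v_2$ in $[0,1]$; in fact $\frac{\partial^2\ln c(u,v)}{\partial u\,\partial v}\ge 0$ on $[0,1]^2$.
   Context: $c$ is the density of the copula $C(u,v)=uv+\delta(1-e^{\alpha(u-u^2)})(1-e^{\alpha(v-v^2)})$; the constraint $|\delta|\le1/\alpha^2$ (for $\alpha\le2$, $\alpha\ne0$) is the parameter range for which $C$ is a copula, and for $\alpha=0$ any $\delta$ is allowed. *)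

From Stdlib Require Import Reals.
From Coquelicot Require Import Coquelicot.
Open Scope R_scope.

Definition cdens (alpha delta u v : R) : R :=
  1 + alpha ^ 2 * delta * (1 - 2 * u) * (1 - 2 * v)
      * exp (alpha * (u - u ^ 2 + v - v ^ 2)).

Definition mixed_dlog (alpha delta u v : R) : R :=
  Derive (fun u' => Derive (fun v' => ln (cdens alpha delta u' v')) v) u.

From Stdlib Require Import Reals Lra Psatz.
From Coquelicot Require Import Coquelicot.
Open Scope R_scope.

(* With φ x = 1 - exp (α (x - x²)) the copula is C(u,v) = uv + δ φ(u) φ(v), so
   c(u,v) = 1 + δ φ'(u) φ'(v).  For α ≤ 2 the factor 2 - α (1 - 2x)² of φ'' is
   nonnegative on [0,1], hence φ''(x) φ''(y) ≥ 0 there.  By the mean value theorem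
   the TP2 determinant δ (φ'(u2) - φ'(u1)) (φ'(v2) - φ'(v1)) is then nonnegative,
   and wherever c > 0 the mixed log-derivative is δ φ''(u) φ''(v) / c².
   Since φ'(x)² ≤ α² with equality only at x ∈ {0,1}, and δ α² ≤ 1, the density
   vanishes on [0,1]² only at the corners (0,1) and (1,0) when δ α² = 1.  There
   ln c is undefined and [Derive] returns a junk value; the one-sided difference
   quotients it is built from diverge or vanish, so that value is 0. *)

Lemma exp_le_compat x y : x <= y -> exp x <= exp y.
Proof.
  intros h. destruct (Rle_lt_or_eq_dec _ _ h) as [lt | ->];
    [apply Rlt_le, exp_increasing, lt | apply Rle_refl].
Qed.

Lemma exp_ge_one_sub_abs_mul a y : 0 <= y -> 1 - Rabs a * y <= exp (a * y).
Proof.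
  intros hy. apply Rle_trans with (1 + a * y); [|apply exp_ineq1_le].
  pose proof (Rabs_maj2 a). nra.
Qed.

Lemma mul_exp_one_sub_le t : t * exp (1 - t) <= 1.
Proof.
  assert (H := exp_ineq1_le (t - 1)).
  assert (E : exp (t - 1) * exp (1 - t) = 1) by (rewrite <- exp_plus, <- exp_0; f_equal; ring).
  pose proof (exp_pos (1 - t)). nra.
Qed.

Lemma mul_exp_one_sub_lt t : t <> 1 -> t * exp (1 - t) < 1.
Proof.
  intros ht. assert (H := exp_ineq1 (t - 1) ltac:(lra)).
  assert (E : exp (t - 1) * exp (1 - t) = 1) by (rewrite <- exp_plus, <- exp_0; f_equal; ring).
  pose proof (exp_pos (1 - t)). nra.
Qed.

Lemma one_lt_mul_exp a h : 0 < h <= 1 -> 5 * Rabs a * h < 2 - a ->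
  1 < (1 + 2 * h) * exp (- a * h * (1 + h)).
Proof.
  intros hh hsmall.
  assert (hE := exp_ineq1_le (- a * h * (1 + h))).
  assert (hcubic : a * h ^ 2 * (3 + 2 * h) <= 5 * Rabs a * h ^ 2).
  { assert (hw : 0 <= h ^ 2 * (3 + 2 * h)) by (apply Rmult_le_pos; nra).
    assert (a * (h ^ 2 * (3 + 2 * h)) <= Rabs a * (h ^ 2 * (3 + 2 * h)))
      by (apply Rmult_le_compat_r; [exact hw | apply Rle_abs]).
    assert (Rabs a * (h ^ 2 * (3 + 2 * h)) <= Rabs a * (h ^ 2 * 5))
      by (apply Rmult_le_compat_l; [apply Rabs_pos | nra]).
    lra. }
  assert (hlin : 5 * Rabs a * h ^ 2 < (2 - a) * h).
  { replace (5 * Rabs a * h ^ 2) with ((5 * Rabs a * h) * h) by ring.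
    apply Rmult_lt_compat_r; lra. }
  apply Rlt_le_trans with ((1 + 2 * h) * (1 + - a * h * (1 + h))); [nra|].
  apply Rmult_le_compat_l; lra.
Qed.

Lemma mul_exp_lt_one h : 0 < h -> (1 + 2 * h) * exp (- 2 * h * (1 + h)) < 1.
Proof.
  intros hh.
  assert (hE := exp_ineq1 (2 * h * (1 + h)) ltac:(nra)).
  assert (hinv : exp (- 2 * h * (1 + h)) * exp (2 * h * (1 + h)) = 1)
    by (rewrite <- exp_plus, <- exp_0; f_equal; ring).
  pose proof (exp_pos (- 2 * h * (1 + h))). nra.
Qed.

Lemma ln_nonpos x : x <= 0 -> ln x = 0.
Proof. intros h. unfold ln. destruct (Rlt_dec 0 x); [exfalso; lra | reflexivity]. Qed.

Lemma locally_pos_continuous (f : R -> R) (x : R) :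
  continuous f x -> 0 < f x -> locally x (fun y => 0 < f y).
Proof. intros hf hx. exact (hf _ (open_gt 0 _ hx)). Qed.

Lemma locally_neg_continuous (f : R -> R) (x : R) :
  continuous f x -> f x < 0 -> locally x (fun y => f y < 0).
Proof. intros hf hx. exact (hf _ (open_lt 0 _ hx)). Qed.

Lemma at_right_of_forall x eps (P : R -> Prop) :
  0 < eps -> (forall h, 0 < h < eps -> P (x + h)) -> at_right x P.
Proof.
  intros he hP. exists (mkposreal eps he). intros y hy hxy.
  replace y with (x + (y - x)) by ring. apply hP.
  change (Rabs (y - x) < eps) in hy. rewrite Rabs_right in hy; lra.
Qed.

Lemma at_right_seq x (P : R -> Prop) :
  at_right x P -> eventually (fun n => P (x + / (INR n + 1))).
Proof.
  intros hP. change (locally x (fun y => x < y -> P y)) in hP.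
  assert (H : Rbar_locally' x (fun y => x < y -> P y)).
  { simpl. unfold locally'. change (locally x (fun y => y <> x -> x < y -> P y)).
    revert hP. apply filter_imp. intros y hy _. exact hy. }
  apply filterlim_Rbar_loc_seq in H. unfold filtermap in H. simpl in H. revert H.
  apply filter_imp. intros n hn. apply hn.
  pose proof (pos_INR n). assert (0 < / (INR n + 1)) by (apply Rinv_0_lt_compat; lra). lra.
Qed.

Lemma is_lim_seq_INR_S : is_lim_seq (fun n => INR n + 1) p_infty.
Proof.
  apply is_lim_seq_ext with (fun n => INR (S n)); [intros n; apply S_INR|].
  apply (is_lim_seq_incr_1 INR), is_lim_seq_INR.
Qed.

(* [Derive f x] is the real part of the limit of the difference quotients along
   x + 1/(n+1), hence 0 whenever that one-sided limit is infinite. *)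
Lemma Derive_eq_Lim_seq f x :
  Derive f x = real (Lim_seq (fun n => (f (x + / (INR n + 1)) - f x) * (INR n + 1))).
Proof.
  unfold Derive, Lim. f_equal. apply Lim_seq_ext. intros n. simpl.
  rewrite Rplus_0_l. unfold Rdiv. rewrite Rinv_inv. reflexivity.
Qed.

Lemma Derive_right_const f x K : at_right x (fun y => f y = K) -> Derive f x = 0.
Proof.
  intros hK. rewrite Derive_eq_Lim_seq.
  rewrite (Lim_seq_ext_loc _ (fun n => (K - f x) * (INR n + 1))).
  2:{ generalize (at_right_seq x _ hK). apply filter_imp. intros n ->. reflexivity. }
  rewrite (is_lim_seq_unique _ _ (is_lim_seq_scal_l _ (K - f x) _ is_lim_seq_INR_S)).
  simpl. destruct (Rle_dec 0 (K - f x)) as [h | h];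
    [destruct (Rle_lt_or_eq_dec 0 (K - f x) h) |]; reflexivity.
Qed.

Lemma Derive_right_m_infty f x k :
  0 < k -> at_right x (fun y => f y <= - k / (y - x)) -> Derive f x = 0.
Proof.
  intros hk hf. rewrite Derive_eq_Lim_seq.
  rewrite (is_lim_seq_unique _ m_infty); [reflexivity|].
  apply is_lim_seq_le_m_loc with (fun n => (- k * (INR n + 1) - f x) * (INR n + 1)).
  - generalize (at_right_seq _ _ hf). apply filter_imp. intros n hn.
    replace (x + / (INR n + 1) - x) with (/ (INR n + 1)) in hn by ring.
    unfold Rdiv in hn. rewrite Rinv_inv in hn.
    pose proof (pos_INR n). apply Rmult_le_compat_r; lra.
  - apply is_lim_seq_mult with m_infty p_infty; [|exact is_lim_seq_INR_S | reflexivity].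
    apply is_lim_seq_plus with m_infty (- f x); [|apply is_lim_seq_const | reflexivity].
    assert (H := is_lim_seq_scal_l _ (- k) _ is_lim_seq_INR_S).
    simpl in H. destruct (Rle_dec 0 (- k)); [lra|]. exact H.
Qed.

(* φ' and φ'' for the generator φ x = 1 - exp (a (x - x²)). *)
Definition dphi (a x : R) : R := - a * (1 - 2 * x) * exp (a * (x - x ^ 2)).
Definition ddphi (a x : R) : R := a * exp (a * (x - x ^ 2)) * (2 - a * (1 - 2 * x) ^ 2).

Section Density.
Variables a d : R.

Lemma cdens_dphi u v : cdens a d u v = 1 + d * dphi a u * dphi a v.
Proof.
  unfold cdens, dphi.
  replace (a * (u - u ^ 2 + v - v ^ 2)) with (a * (u - u ^ 2) + a * (v - v ^ 2)) by ring.
  rewrite exp_plus. ring.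
Qed.

Lemma cdens_comm u v : cdens a d u v = cdens a d v u.
Proof. rewrite !cdens_dphi. ring. Qed.

Lemma is_derive_dphi x : is_derive (dphi a) x (ddphi a x).
Proof.
  unfold dphi, ddphi. auto_derive; [exact I|].
  replace (x + - (x * (x * 1))) with (x - x ^ 2) by ring. ring.
Qed.

Lemma dphi0 : dphi a 0 = - a.
Proof. unfold dphi. replace (a * (0 - 0 ^ 2)) with 0 by ring. rewrite exp_0. ring. Qed.

Lemma dphi1 : dphi a 1 = a.
Proof. unfold dphi. replace (a * (1 - 1 ^ 2)) with 0 by ring. rewrite exp_0. ring. Qed.

Lemma ddphi0 : ddphi a 0 = a * (2 - a).
Proof. unfold ddphi. replace (a * (0 - 0 ^ 2)) with 0 by ring. rewrite exp_0. ring. Qed.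

Lemma ddphi1 : ddphi a 1 = a * (2 - a).
Proof. unfold ddphi. replace (a * (1 - 1 ^ 2)) with 0 by ring. rewrite exp_0. ring. Qed.

Lemma ddphi_mul_nonneg x y : a <= 2 -> 0 <= x <= 1 -> 0 <= y <= 1 ->
  0 <= ddphi a x * ddphi a y.
Proof.
  intros ha hx hy.
  assert (hfac : forall z, 0 <= z <= 1 -> 0 <= 2 - a * (1 - 2 * z) ^ 2).
  { intros z hz. assert (0 <= (1 - 2 * z) ^ 2 <= 1) by (split; [apply pow2_ge_0 | nra]). nra. }
  unfold ddphi.
  replace (a * exp (a * (x - x ^ 2)) * (2 - a * (1 - 2 * x) ^ 2) *
           (a * exp (a * (y - y ^ 2)) * (2 - a * (1 - 2 * y) ^ 2)))
    with ((a * a) * (exp (a * (x - x ^ 2)) * exp (a * (y - y ^ 2))) *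
          ((2 - a * (1 - 2 * x) ^ 2) * (2 - a * (1 - 2 * y) ^ 2))) by ring.
  pose proof (exp_pos (a * (x - x ^ 2))). pose proof (exp_pos (a * (y - y ^ 2))).
  pose proof (hfac x hx). pose proof (hfac y hy).
  apply Rmult_le_pos; [apply Rmult_le_pos|]; nra.
Qed.

Lemma dphi_sub_mul_nonneg x1 x2 y1 y2 : a <= 2 ->
  0 <= x1 -> x1 < x2 -> x2 <= 1 -> 0 <= y1 -> y1 < y2 -> y2 <= 1 ->
  0 <= (dphi a x2 - dphi a x1) * (dphi a y2 - dphi a y1).
Proof.
  intros ha hx1 hx hx2 hy1 hy hy2.
  assert (mvt : forall z1 z2, z1 < z2 ->
            exists c, dphi a z2 - dphi a z1 = ddphi a c * (z2 - z1) /\ z1 < c < z2).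
  { intros z1 z2 hz. apply MVT_cor2; [exact hz|].
    intros c _. apply is_derive_Reals, is_derive_dphi. }
  destruct (mvt x1 x2 hx) as [cx [-> hcx]]. destruct (mvt y1 y2 hy) as [cy [-> hcy]].
  assert (0 <= ddphi a cx * ddphi a cy) by (apply ddphi_mul_nonneg; lra).
  replace (ddphi a cx * (x2 - x1) * (ddphi a cy * (y2 - y1)))
    with (ddphi a cx * ddphi a cy * ((x2 - x1) * (y2 - y1))) by ring.
  apply Rmult_le_pos; nra.
Qed.

Lemma cdens_tp2 u1 u2 v1 v2 : a <= 2 -> 0 <= d ->
  0 <= u1 -> u1 < u2 -> u2 <= 1 -> 0 <= v1 -> v1 < v2 -> v2 <= 1 ->
  0 <= cdens a d u1 v1 * cdens a d u2 v2 - cdens a d u1 v2 * cdens a d u2 v1.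
Proof.
  intros ha hd hu1 hu hu2 hv1 hv hv2. rewrite !cdens_dphi.
  replace ((1 + d * dphi a u1 * dphi a v1) * (1 + d * dphi a u2 * dphi a v2) -
           (1 + d * dphi a u1 * dphi a v2) * (1 + d * dphi a u2 * dphi a v1))
    with (d * ((dphi a u2 - dphi a u1) * (dphi a v2 - dphi a v1))) by ring.
  apply Rmult_le_pos; [exact hd | apply dphi_sub_mul_nonneg; assumption].
Qed.

Lemma dphi_sq_le x : a <= 2 -> 0 <= x <= 1 ->
  dphi a x ^ 2 <= a ^ 2 * ((1 - 2 * x) ^ 2 * exp (1 - (1 - 2 * x) ^ 2)).
Proof.
  intros ha hx.
  replace (dphi a x ^ 2) with (a ^ 2 * ((1 - 2 * x) ^ 2 * exp (2 * a * (x - x ^ 2)))).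
  2:{ unfold dphi. replace (2 * a * (x - x ^ 2)) with (a * (x - x ^ 2) + a * (x - x ^ 2)) by ring.
      rewrite exp_plus. ring. }
  apply Rmult_le_compat_l; [apply pow2_ge_0|].
  apply Rmult_le_compat_l; [apply pow2_ge_0|].
  apply exp_le_compat. assert (0 <= x - x ^ 2) by nra. nra.
Qed.

Lemma cdens_nonpos_corner u v : a <= 2 -> 0 <= d -> d * a ^ 2 <= 1 ->
  0 <= u <= 1 -> 0 <= v <= 1 -> cdens a d u v <= 0 ->
  d * a ^ 2 = 1 /\ (u = 0 /\ v = 1 \/ u = 1 /\ v = 0).
Proof.
  intros ha hd hda hu hv hc. rewrite cdens_dphi in hc.
  assert (hB : forall x, 0 <= x <= 1 ->
            let B := (1 - 2 * x) ^ 2 * exp (1 - (1 - 2 * x) ^ 2) in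
            0 <= B <= 1 /\ (B = 1 -> x = 0 \/ x = 1)).
  { intros x hx B. split; [split|].
    - apply Rmult_le_pos; [apply pow2_ge_0 | apply Rlt_le, exp_pos].
    - apply mul_exp_one_sub_le.
    - intros hB1. destruct (Req_dec ((1 - 2 * x) ^ 2) 1) as [e | ne]; [nra|].
      pose proof (mul_exp_one_sub_lt _ ne). unfold B in hB1. lra. }
  destruct (hB u hu) as [[hBu0 hBu1] hBu]. destruct (hB v hv) as [[hBv0 hBv1] hBv].
  assert (hpu := dphi_sq_le u ha hu). assert (hpv := dphi_sq_le v ha hv).
  set (Bu := (1 - 2 * u) ^ 2 * exp (1 - (1 - 2 * u) ^ 2)) in *.
  set (Bv := (1 - 2 * v) ^ 2 * exp (1 - (1 - 2 * v) ^ 2)) in *.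
  assert (hsq : (d * dphi a u * dphi a v) ^ 2 <= (d * a ^ 2) ^ 2 * (Bu * Bv)).
  { replace ((d * dphi a u * dphi a v) ^ 2) with (d ^ 2 * (dphi a u ^ 2 * dphi a v ^ 2)) by ring.
    replace ((d * a ^ 2) ^ 2 * (Bu * Bv)) with (d ^ 2 * ((a ^ 2 * Bu) * (a ^ 2 * Bv))) by ring.
    apply Rmult_le_compat_l; [apply pow2_ge_0|].
    apply Rmult_le_compat; try apply pow2_ge_0; assumption. }
  assert (hone : 1 <= (d * a ^ 2) ^ 2 * (Bu * Bv)) by nra.
  assert (hda0 : 0 <= d * a ^ 2) by (apply Rmult_le_pos; [lra | apply pow2_ge_0]).
  assert (hBuv : Bu * Bv <= 1) by nra.
  set (D := d * a ^ 2) in *. set (P := Bu * Bv) in *.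
  assert (hda1 : D = 1) by nra.
  rewrite hda1 in hone. unfold P in hone.
  assert (Bu = 1 /\ Bv = 1) as [hu1 hv1] by (split; nra).
  split; [exact hda1|].
  destruct (hBu hu1) as [-> | ->]; destruct (hBv hv1) as [-> | ->];
    rewrite ?dphi0, ?dphi1 in hc; nra.
Qed.

Lemma is_derive_cdens_v u v :
  is_derive (fun v' => cdens a d u v') v (d * dphi a u * ddphi a v).
Proof.
  apply is_derive_ext with (fun v' => 1 + d * dphi a u * dphi a v').
  { intros v'. rewrite cdens_dphi. reflexivity. }
  unfold dphi at 2. unfold ddphi. auto_derive; [exact I|].
  replace (v + - (v * (v * 1))) with (v - v ^ 2) by ring. ring.
Qed.

Lemma is_derive_cdens_u u v :
  is_derive (fun u' => cdens a d u' v) u (d * dphi a v * ddphi a u).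
Proof.
  apply is_derive_ext with (fun u' => cdens a d v u').
  { intros u'. apply cdens_comm. }
  apply is_derive_cdens_v.
Qed.

Lemma is_derive_ln_cdens_v u v : 0 < cdens a d u v ->
  is_derive (fun v' => ln (cdens a d u v')) v (d * dphi a u * ddphi a v / cdens a d u v).
Proof.
  intros hc. exact (is_derive_comp ln _ v _ _ (is_derive_ln _ hc) (is_derive_cdens_v u v)).
Qed.

Lemma Derive_ln_cdens_v_pos u v : 0 < cdens a d u v ->
  Derive (fun v' => ln (cdens a d u v')) v = d * dphi a u * ddphi a v / cdens a d u v.
Proof. intros hc. apply is_derive_unique, is_derive_ln_cdens_v, hc. Qed.

Lemma Derive_ln_cdens_v_neg u v : cdens a d u v < 0 ->
  Derive (fun v' => ln (cdens a d u v')) v = 0.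
Proof.
  intros hc. rewrite <- (Derive_const 0 v). apply Derive_ext_loc.
  assert (hcont := ex_derive_continuous _ _ (ex_intro _ _ (is_derive_cdens_v u v))).
  generalize (locally_neg_continuous _ _ hcont hc). apply filter_imp.
  intros v' hv'. apply ln_nonpos. lra.
Qed.

Lemma mixed_dlog_pos u v : 0 < cdens a d u v ->
  mixed_dlog a d u v = d * ddphi a u * ddphi a v / cdens a d u v ^ 2.
Proof.
  intros hc. unfold mixed_dlog.
  rewrite (Derive_ext_loc _ (fun u' => d * dphi a u' * ddphi a v / cdens a d u' v)).
  2:{ assert (hcont := ex_derive_continuous _ _ (ex_intro _ _ (is_derive_cdens_u u v))).
      generalize (locally_pos_continuous _ _ hcont hc). apply filter_imp.
      intros u' hu'. apply Derive_ln_cdens_v_pos, hu'. }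
  apply is_derive_unique.
  assert (hnum : is_derive (fun u' => d * dphi a u' * ddphi a v) u (d * ddphi a u * ddphi a v)).
  { apply is_derive_ext with (fun u' => d * ddphi a v * dphi a u').
    { intros u'. simpl. ring. }
    replace (d * ddphi a u * ddphi a v) with (d * ddphi a v * ddphi a u) by ring.
    apply is_derive_scal, is_derive_dphi. }
  replace (d * ddphi a u * ddphi a v / cdens a d u v ^ 2) with
    ((d * ddphi a u * ddphi a v * cdens a d u v
      - d * dphi a u * ddphi a v * (d * dphi a v * ddphi a u)) / cdens a d u v ^ 2).
  - apply (is_derive_div (fun u' => d * dphi a u' * ddphi a v) (fun u' => cdens a d u' v));
      [exact hnum | apply is_derive_cdens_u | lra].
  - rewrite cdens_dphi in *. field. lra.
Qed.

(* Near (0,1): c(h,1) = 1 - P with P = (1 - 2h) exp (a (h - h²)) ≥ 1 - (2 + |a|) h,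
   so ∂_v ln c(h,1) = -(2 - a) P / (1 - P) blows up like -1/h. *)
Lemma corner01_slope_bound h : a < 2 -> d * a ^ 2 = 1 -> 0 < h ->
  2 * (2 + Rabs a) * h <= 1 -> 0 < cdens a d h 1 ->
  d * dphi a h * ddphi a 1 / cdens a d h 1 <= - ((2 - a) / (2 * (2 + Rabs a))) / h.
Proof.
  intros ha hda hh hsmall hc.
  set (s := 2 + Rabs a) in *. assert (hs : 2 <= s) by (pose proof (Rabs_pos a); unfold s; lra).
  set (P := (1 - 2 * h) * exp (a * (h - h ^ 2))).
  assert (hcP : cdens a d h 1 = 1 - P).
  { rewrite cdens_dphi, dphi1. transitivity (1 - d * a ^ 2 * P); [unfold P, dphi; ring|].
    rewrite hda. ring. }
  assert (hnum : d * dphi a h * ddphi a 1 = - (2 - a) * P).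
  { rewrite ddphi1. transitivity (- (2 - a) * (d * a ^ 2) * P); [unfold P, dphi; ring|].
    rewrite hda. ring. }
  assert (hP : 1 - s * h <= P).
  { assert (hE := exp_ge_one_sub_abs_mul a (h - h ^ 2) ltac:(nra)).
    assert (0 <= 1 - 2 * h) by nra. pose proof (Rabs_pos a).
    assert (hE' : 1 - Rabs a * h <= exp (a * (h - h ^ 2))) by nra.
    unfold P, s. apply Rle_trans with ((1 - 2 * h) * (1 - Rabs a * h)); [nra|].
    apply Rmult_le_compat_l; assumption. }
  rewrite hcP in hc |- *. rewrite hnum.
  assert (key : 0 <= (2 * s * h * P - (1 - P)) / (2 * s * h * (1 - P))).
  { apply Rdiv_le_0_compat; nra. }
  apply Rminus_le.
  replace (- (2 - a) * P / (1 - P) - - ((2 - a) / (2 * s)) / h)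
    with (- (2 - a) * ((2 * s * h * P - (1 - P)) / (2 * s * h * (1 - P)))) by (field; lra).
  nra.
Qed.

Lemma mixed_dlog_corner01 : a <= 2 -> 0 <= d -> d * a ^ 2 = 1 -> mixed_dlog a d 0 1 = 0.
Proof.
  intros ha hd hda.
  assert (hpos : forall h, 0 < h <= 1 -> 0 < cdens a d h 1).
  { intros h hh. destruct (Rlt_or_le 0 (cdens a d h 1)) as [p | np]; [exact p|].
    destruct (cdens_nonpos_corner h 1 ha hd (Req_le _ _ hda) ltac:(lra) ltac:(lra) np)
      as [_ [[] | []]]; lra. }
  assert (hs : 0 < 2 * (2 + Rabs a)) by (pose proof (Rabs_pos a); lra).
  unfold mixed_dlog. destruct (Rle_lt_or_eq_dec _ _ ha) as [ha2 | ha2].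
  - apply Derive_right_m_infty with ((2 - a) / (2 * (2 + Rabs a))).
    { apply Rdiv_lt_0_compat; lra. }
    apply at_right_of_forall with (/ (2 * (2 + Rabs a))); [apply Rinv_0_lt_compat, hs|].
    intros h hh. rewrite !Rplus_0_l, Rminus_0_r.
    assert (hh' : 2 * (2 + Rabs a) * h <= 1).
    { apply Rlt_le. replace 1 with (2 * (2 + Rabs a) * / (2 * (2 + Rabs a))) by (field; lra).
      apply Rmult_lt_compat_l; lra. }
    assert (h <= 1) by (pose proof (Rabs_pos a); nra).
    rewrite Derive_ln_cdens_v_pos by (apply hpos; lra).
    apply corner01_slope_bound; try lra. apply hpos. lra.
  - apply Derive_right_const with 0. apply at_right_of_forall with 1; [lra|].
    intros h hh. rewrite Rplus_0_l, Derive_ln_cdens_v_pos, ddphi1 by (apply hpos; lra).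
    replace (2 - a) with 0 by lra. unfold Rdiv. ring.
Qed.

Lemma cdens_corner10_shift h : d * a ^ 2 = 1 ->
  cdens a d (1 + h) 0 = 1 - (1 + 2 * h) * exp (- a * h * (1 + h)).
Proof.
  intros hda. rewrite cdens_dphi, dphi0. unfold dphi.
  replace (a * (1 + h - (1 + h) ^ 2)) with (- a * h * (1 + h)) by ring.
  transitivity (1 - d * a ^ 2 * ((1 + 2 * h) * exp (- a * h * (1 + h)))); [ring|].
  rewrite hda. ring.
Qed.

(* Just right of (1,0): for a < 2, c(1+h, ·) is negative near 0, so ln c vanishes
   there; for a = 2 the inner derivative carries the factor φ''(0) = 0. *)
Lemma mixed_dlog_corner10 : a <= 2 -> d * a ^ 2 = 1 -> mixed_dlog a d 1 0 = 0.
Proof.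
  intros ha hda. unfold mixed_dlog. apply Derive_right_const with 0.
  destruct (Rle_lt_or_eq_dec _ _ ha) as [ha2 | ha2].
  - assert (heps : 0 < (2 - a) / (5 * Rabs a + 1))
      by (pose proof (Rabs_pos a); apply Rdiv_lt_0_compat; lra).
    apply at_right_of_forall with (Rmin 1 ((2 - a) / (5 * Rabs a + 1))); [apply Rmin_pos; lra|].
    intros h [hh0 hh]. apply Derive_ln_cdens_v_neg.
    rewrite cdens_corner10_shift by exact hda.
    assert (hh1 := Rlt_le_trans _ _ _ hh (Rmin_l _ _)).
    assert (hh2 := Rlt_le_trans _ _ _ hh (Rmin_r _ _)).
    assert (hsmall : 5 * Rabs a * h < 2 - a).
    { pose proof (Rabs_pos a).
      apply Rmult_lt_compat_l with (r := 5 * Rabs a + 1) in hh2; [|lra].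
      replace ((5 * Rabs a + 1) * ((2 - a) / (5 * Rabs a + 1))) with (2 - a) in hh2
        by (field; lra).
      nra. }
    pose proof (one_lt_mul_exp a h (conj hh0 (Rlt_le _ _ hh1)) hsmall). lra.
  - apply at_right_of_forall with 1; [lra|]. intros h hh.
    assert (hpos : 0 < cdens a d (1 + h) 0).
    { rewrite cdens_corner10_shift, ha2 by exact hda.
      replace (- (2) * h * (1 + h)) with (- 2 * h * (1 + h)) by ring.
      pose proof (mul_exp_lt_one h ltac:(lra)). lra. }
    cbv beta. rewrite Derive_ln_cdens_v_pos, ddphi0 by exact hpos.
    replace (2 - a) with 0 by lra. unfold Rdiv. ring.
Qed.

End Density.

Theorem proposition3 (alpha delta : R)
  (halpha : alpha <= 2) (hdelta : 0 <= delta)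
  (hbound : alpha <> 0 -> delta <= 1 / alpha ^ 2) :
  (forall u1 u2 v1 v2 : R,
      0 <= u1 -> u1 < u2 -> u2 <= 1 ->
      0 <= v1 -> v1 < v2 -> v2 <= 1 ->
      cdens alpha delta u1 v1 * cdens alpha delta u2 v2
        - cdens alpha delta u1 v2 * cdens alpha delta u2 v1 >= 0)
  /\
  (forall u v : R, 0 <= u <= 1 -> 0 <= v <= 1 ->
      mixed_dlog alpha delta u v >= 0).
Proof.
  split.
  - intros. apply Rle_ge, cdens_tp2; assumption.
  - intros u v hu hv.
    assert (hda : delta * alpha ^ 2 <= 1).
    { destruct (Req_dec alpha 0) as [-> | ha0]; [lra|].
      assert (0 < alpha ^ 2) by (apply pow2_gt_0, ha0).
      specialize (hbound ha0). unfold Rdiv in hbound.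
      apply Rmult_le_compat_r with (r := alpha ^ 2) in hbound; [|lra].
      rewrite Rmult_1_l, Rinv_l in hbound; lra. }
    apply Rle_ge. destruct (Rlt_or_le 0 (cdens alpha delta u v)) as [hpos | hnonpos].
    + rewrite mixed_dlog_pos by exact hpos.
      assert (0 <= ddphi alpha u * ddphi alpha v) by (apply ddphi_mul_nonneg; assumption).
      apply Rdiv_le_0_compat; [nra | apply pow_lt, hpos].
    + destruct (cdens_nonpos_corner alpha delta u v halpha hdelta hda hu hv hnonpos)
        as [hda1 [[-> ->] | [-> ->]]].
      * rewrite mixed_dlog_corner01; lra.
      * rewrite mixed_dlog_corner10; lra.
Qed.
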